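(* Let $P=\mathbb{Q}[x_1,\dots,x_n]$ and let $\sigma$ be a term ordering on $\mathbb{T}^n$. Let $I$ be a non-zero ideal in $P$, and let $G_\sigma=\{g_1,\dots,g_r\}$ be its reduced $\sigma$-Gröbner basis, indexed so that $\mathrm{LT}_\sigma(g_1)<_\sigma\cdots<_\sigma \mathrm{LT}_\sigma(g_r)$. Let $\tilde G=\{\tilde g_1,\dots,\tilde g_s\}$ be a minimal strong $\sigma$-Gröbner basis of the ideal $J=\langle \operatorname{prim}(G_\sigma)\rangle\subseteq\mathbb{Z}[x_1,\dots,x_n]$. Then: (a) the elements of $\tilde G$ can be indexed so that $\mathrm{LT}_\sigma(\tilde g_i)=\mathrm{LT}_\sigma(g_i)$ for $i=1,\dots,r$, while for $i=r+1,\dots,s$ each $\mathrm{LT}_\sigma(\tilde g_i)$ is a proper multiple of $\mathrm{LT}_\sigma(g_k)$ for some $k\le r$; (b) with this indexing, the subset $\{\tilde g_1,\dots,\tilde g_r\}$ is a minimal $\sigma$-Gröbner basis of $I$ in $P$; (c) with this indexing, $\mathrm{LC}_\sigma(\tilde g_i)$ divides $\mathrm{LC}_\sigma(\operatorname{prim}(g_i))$ for $i=1,\dots,r$; (d) with this indexing, if for some $i\in\{1,\dots,r\}$ there is a prime $p$ such that $p\mid\operatorname{den}(g_i)$ but $p\nmid\operatorname{den}(g_j)$ for every $j=1,\dots,i-1$, then $p\mid \mathrm{LC}_\sigma(\tilde g_i)$.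
   Context: $\mathbb{T}^n$ is the monoid of power-products in $x_1,\dots,x_n$; $\mathrm{LT}_\sigma$, $\mathrm{LC}_\sigma$, $\mathrm{LM}_\sigma$ denote leading power-product (term), leading coefficient and leading monomial $\mathrm{LC}_\sigma(f)\cdot\mathrm{LT}_\sigma(f)$. For $f\in P$, $\operatorname{den}(f)$ is the positive least common multiple of the denominators of the coefficients of $f$. For non-zero $f\in P$, with $c$ the integer content of $f\cdot\operatorname{den}(f)\in\mathbb{Z}[x_1,\dots,x_n]$, the primitive integral part is $\operatorname{prim}(f)=c^{-1}f\cdot\operatorname{den}(f)$; for a set $F$, $\operatorname{prim}(F)=\{\operatorname{prim}(f):f\in F\}$. Non-zero polynomials $g_1,\dots,g_s\in\mathbb{Z}[x_1,\dots,x_n]$ form a strong $\sigma$-Gröbner basis of $J=\langle g_1,\dots,g_s\rangle$ if for each non-zero $f\in J$ some $\mathrm{LM}_\sigma(g_i)$ divides $\mathrm{LM}_\sigma(f)$ in $\mathbb{Z}[x_1,\dots,x_n]$; it is minimal if moreover $\mathrm{LM}_\sigma(g_i)\nmid\mathrm{LM}_\sigma(g_j)$ whenever $i\neq j$. *)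

From HB Require Import structures.
From mathcomp Require Import all_boot all_order all_algebra.
From mathcomp Require Import mpoly.

Set Implicit Arguments.
Unset Strict Implicit.
Unset Printing Implicit Defensive.

Import Order.TTheory GRing.Theory Num.Theory.
Local Open Scope ring_scope.

Definition term_order (n : nat) (le : rel 'X_{1..n}) : Prop :=
  [/\ reflexive le, antisymmetric le, transitive le & total le] /\
  (forall m1 m2 m : 'X_{1..n}, le m1 m2 -> le (m1 + m)%MM (m2 + m)%MM) /\
  (forall m : 'X_{1..n}, le 0%MM m).

Definition ltT (n : nat) (le : rel 'X_{1..n}) (m1 m2 : 'X_{1..n}) : bool :=
  le m1 m2 && (m1 != m2).

Definition tdvd (n : nat) (m1 m2 : 'X_{1..n}) : bool := (m1 <= m2)%MM.

Section Leading.
Variables (n : nat) (R : nzRingType) (le : rel 'X_{1..n}).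

(* leading term LT_sigma(f): the le-maximum of the support (0%MM if f = 0) *)
Definition LT (f : {mpoly R[n]}) : 'X_{1..n} :=
  foldr (fun m acc => if le acc m then m else acc) 0%MM (msupp f).

Definition LC (f : {mpoly R[n]}) : R := f@_(LT f).

End Leading.

Definition is_ideal (n : nat) (R : comNzRingType) (I : {mpoly R[n]} -> Prop)
  : Prop :=
  [/\ I 0,
      (forall f g, I f -> I g -> I (f + g))
    & (forall h f, I f -> I (h * f))].

Definition in_ideal_gen (n : nat) (R : comNzRingType) (F : seq {mpoly R[n]})
    (f : {mpoly R[n]}) : Prop :=
  exists c : 'I_(size F) -> {mpoly R[n]}, f = \sum_(i < size F) c i * F`_i.

Section GBField.
Variables (n : nat) (le : rel 'X_{1..n}).

Definition is_GB (I : {mpoly rat[n]} -> Prop) (G : seq {mpoly rat[n]}) : Prop :=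
  [/\ forall g, g \in G -> g != 0,
      forall g, g \in G -> I g
    & forall f, I f -> f != 0 -> exists2 g, g \in G & tdvd (LT le g) (LT le f)].

Definition is_minimal_GB (I : {mpoly rat[n]} -> Prop) (G : seq {mpoly rat[n]})
  : Prop :=
  is_GB I G /\
  (forall i j, (i < size G)%N -> (j < size G)%N -> i != j ->
     ~~ tdvd (LT le G`_i) (LT le G`_j)).

Definition is_reduced_GB (I : {mpoly rat[n]} -> Prop) (G : seq {mpoly rat[n]})
  : Prop :=
  [/\ is_GB I G, uniq G,
      (forall g, g \in G -> LC le g = 1)
    & (forall g h, g \in G -> h \in G -> g != h ->
         forall m, m \in msupp g -> ~~ tdvd (LT le h) m)].

End GBField.

Section Prim.
Variable n : nat.

Definition den (f : {mpoly rat[n]}) : nat :=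
  \big[lcmn/1%N]_(m <- msupp f) `|denq f@_m|%N.

Definition icoef (f : {mpoly rat[n]}) (m : 'X_{1..n}) : int :=
  numq (f@_m * (den f)%:R).

Definition content (f : {mpoly rat[n]}) : nat :=
  \big[gcdn/0%N]_(m <- msupp f) `|icoef f m|%N.

(* prim(f) = c^{-1} * f * den(f), as an element of Z[x_1..x_n] *)
Definition prim (f : {mpoly rat[n]}) : {mpoly int[n]} :=
  \sum_(m <- msupp f) ((icoef f m %/ (content f)%:Z)%Z *: 'X_[m]).

Definition toQ (f : {mpoly int[n]}) : {mpoly rat[n]} := map_mpoly intr f.

End Prim.

Section GBZ.
Variables (n : nat) (le : rel 'X_{1..n}).

Definition LM_dvd (g f : {mpoly int[n]}) : bool :=
  tdvd (LT le g) (LT le f) && (LC le g %| LC le f)%Z.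

Definition is_strong_GB (F G : seq {mpoly int[n]}) : Prop :=
  [/\ forall g, g \in G -> g != 0,
      (forall f, in_ideal_gen G f <-> in_ideal_gen F f)
    & forall f, in_ideal_gen G f -> f != 0 ->
        exists2 g, g \in G & LM_dvd g f].

Definition is_minimal_strong_GB (F G : seq {mpoly int[n]}) : Prop :=
  is_strong_GB F G /\
  (forall i j, (i < size G)%N -> (j < size G)%N -> i != j ->
     ~~ LM_dvd G`_i G`_j).

End GBZ.

(* The primitive parts of the reduced basis generate an ideal J of Z[x] whose
   rational span is I, so the leading term of every element of J is a multiple
   of some LT(g_k).  Since prim(g_i) lies in J with leading term t_i, the strong
   basis has an element with leading term exactly t_i whose leading coefficient
   divides LC(prim(g_i)); a Bezout combination shows that no two elements of a
   minimal strong basis share a leading term.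
   For (d), if p does not divide LC(h) for the element h with leading term t_i,
   then h / LC(h) is a p-integral element of I that is monic with leading term
   t_i.  Reducing it by g_1, ..., g_(i-1), which are p-integral because p does
   not divide their denominators, keeps it p-integral; as G is reduced and the
   term ordering is well founded (Dickson's lemma) the reduction ends at g_i,
   which would then be p-integral, contradicting p | den(g_i). *)

From HB Require Import structures.
From mathcomp Require Import all_boot all_order all_algebra.
From mathcomp Require Import mpoly.
From mathcomp Require Import ring.
From Stdlib Require Import Classical ClassicalEpsilon.
Import Order.TTheory GRing.Theory Num.Theory.
Local Open Scope ring_scope.

Set Implicit Arguments.
Unset Strict Implicit.
Unset Printing Implicit Defensive.

Lemma tdvd_refl n (m : 'X_{1..n}) : tdvd m m.
Proof. exact: lepm_refl. Qed.

Lemma tdvd_trans n (a b c : 'X_{1..n}) : tdvd a b -> tdvd b c -> tdvd a c.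
Proof. exact: lepm_trans. Qed.

Lemma tdvd_anti n (a b : 'X_{1..n}) : tdvd a b -> tdvd b a -> a = b.
Proof.
move=> /mnm_lepP ab /mnm_lepP ba; apply/mnmP => i.
by apply/eqP; rewrite eqn_leq ab ba.
Qed.

Section TermOrder.
Variables (n : nat) (le : rel 'X_{1..n}).
Hypothesis le_order : term_order le.
Implicit Types a b c m u : 'X_{1..n}.

Lemma termo_refl m : le m m.
Proof. by case: le_order => [[? ? ? ?] _]. Qed.

Lemma termo_anti a b : le a b -> le b a -> a = b.
Proof. by case: le_order => [[? anti ? ?] _] ab ba; apply: anti; rewrite ab ba. Qed.

Lemma termo_trans b a c : le a b -> le b c -> le a c.
Proof. by case: le_order => [[? ? tr ?] _]; apply: tr. Qed.

Lemma termo_total a b : le a b || le b a.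
Proof. by case: le_order => [[? ? ? tot] _]. Qed.

Lemma termo_ge0 m : le 0%MM m.
Proof. by case: le_order => [_ [_ ge0]]. Qed.

Lemma termo_addl u a b : le a b -> le (u + a)%MM (u + b)%MM.
Proof. by case: le_order => [_ [addr _]]; rewrite !(addmC u); apply: addr. Qed.

Lemma termo_tdvd a b : tdvd a b -> le a b.
Proof.
move=> ab; rewrite -(submK ab) addmC -{1}[a]addm0.
exact/termo_addl/termo_ge0.
Qed.

Lemma ltTxx m : ltT le m m = false.
Proof. by rewrite /ltT eqxx andbF. Qed.

Lemma ltT_leF a b : ltT le a b -> le b a = false.
Proof.
case/andP=> ab neq_ab; apply/negP => ba.
by rewrite (termo_anti ab ba) eqxx in neq_ab.
Qed.

Lemma le_ltT_trans b a c : le a b -> ltT le b c -> ltT le a c.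
Proof.
move=> ab bc; have /andP[/(termo_trans ab) ac _] := bc; rewrite /ltT ac /=.
by apply: contraTneq ab => ->; rewrite (ltT_leF bc).
Qed.

Lemma ltT_trans b a c : ltT le a b -> ltT le b c -> ltT le a c.
Proof. by case/andP=> ab _; apply: le_ltT_trans. Qed.

Section LeadingTerm.
Variable R : nzRingType.
Implicit Types f g : {mpoly R[n]}.

Lemma LT_msupp f : f != 0 -> LT le f \in msupp f.
Proof.
rewrite -msupp_eq0 /LT; elim: (msupp f) => // x s IH _ /=.
case: s IH => [|y s] IH /=; first by rewrite termo_ge0 mem_head.
by case: ifP => _; rewrite in_cons ?eqxx ?IH ?orbT.
Qed.

Lemma LT_max f m : m \in msupp f -> le m (LT le f).
Proof.
rewrite /LT; elim: (msupp f) => // x s IH; rewrite in_cons /=.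
set acc := foldr _ _ s; have acc_le : le acc (if le acc x then x else acc).
  by case: ifP => [//|_]; apply: termo_refl.
case/orP=> [/eqP->|/IH ms]; last exact: termo_trans acc_le.
case: ifP => [_|]; first exact: termo_refl.
by have /orP[] := termo_total acc x => [->|].
Qed.

Lemma LT_eq f m :
  m \in msupp f -> (forall m', m' \in msupp f -> le m' m) -> LT le f = m.
Proof.
move=> mf max_m; apply: termo_anti (LT_max mf).
by apply/max_m/LT_msupp; apply: contraTneq mf => ->; rewrite msupp0.
Qed.

Lemma LC_neq0 f : f != 0 -> LC le f != 0.
Proof. by move/LT_msupp; rewrite mcoeff_msupp. Qed.

End LeadingTerm.

Lemma LT_eq_msupp (R R' : nzRingType) (f : {mpoly R[n]}) (g : {mpoly R'[n]}) :
  msupp f =i msupp g -> LT le f = LT le g.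
Proof.
have [->|f_nz] := eqVneq f 0 => fg.
  have [->|g_nz] := eqVneq g 0; first by rewrite /LT msupp0 msupp0.
  by have := LT_msupp g_nz; rewrite -fg msupp0.
apply/esym/LT_eq; first by rewrite -fg LT_msupp.
by move=> m; rewrite -fg; apply: LT_max.
Qed.

Lemma LT_scale (R : idomainType) (c : R) (f : {mpoly R[n]}) :
  c != 0 -> LT le (c *: f) = LT le f.
Proof.
move=> c_nz; apply: LT_eq_msupp => m.
by rewrite !mcoeff_msupp mcoeffZ mulf_eq0 (negbTE c_nz).
Qed.

End TermOrder.

Lemma nat_seq_min_after (a : nat -> nat) N :
  exists i, (N <= i)%N /\ forall j, (i < j)%N -> (a i <= a j)%N.
Proof.
suff: forall v i, (N <= i)%N -> a i = v ->
    exists i, (N <= i)%N /\ forall j, (i < j)%N -> (a i <= a j)%N by apply.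
elim/ltn_ind => v IH i Ni ai_v.
have [[j ij lt_ji]|no_smaller] := classic (exists2 j, (i < j)%N & (a j < a i)%N).
  by apply: (IH (a j) _ j) => //; [rewrite -ai_v | apply: leq_trans Ni (ltnW ij)].
exists i; split=> // j ij; rewrite leqNgt; apply/negP => lt_ji.
by apply: no_smaller; exists j.
Qed.

Lemma nat_seq_nondecreasing_subseq (a : nat -> nat) :
  exists phi : nat -> nat,
    (forall k, (phi k < phi k.+1)%N) /\ (forall k, (a (phi k) <= a (phi k.+1))%N).
Proof.
have [g gP] := choice _ (nat_seq_min_after a).
pose phi k := iter k (fun i => g i.+1) (g 0%N).
exists phi; split=> [k|]; first exact: (gP _).1.
case=> [|k].
- exact/((gP 0%N).2)/(gP _).1.
- exact/((gP _).2)/(gP _).1.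
Qed.

Lemma dickson_subseq n (f : nat -> 'X_{1..n}) k : (k <= n)%N ->
  exists phi : nat -> nat, (forall j, (phi j < phi j.+1)%N) /\
    forall j (i : 'I_n), (i < k)%N -> (f (phi j) i <= f (phi j.+1) i)%N.
Proof.
elim: k => [|k IH] lt_kn; first by exists id.
have [phi [phi_incr phi_mono]] := IH (ltnW lt_kn).
have [psi [psi_incr psi_mono]] := nat_seq_nondecreasing_subseq (fun j => f (phi j) (Ordinal lt_kn)).
exists (phi \o psi); split=> [j|j i] /=.
  exact: (homo_ltn ltn_trans phi_incr) (psi_incr j).
rewrite ltnS leq_eqVlt => /orP[/eqP ik|lt_ik].
  by have -> : i = Ordinal lt_kn by apply: val_inj.
have mono := homo_leq (f := fun j => f (phi j) i) leqnn leq_trans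
  (fun j => phi_mono j i lt_ik).
exact/mono/ltnW.
Qed.

Lemma dickson n (f : nat -> 'X_{1..n}) : exists i j, (i < j)%N /\ tdvd (f i) (f j).
Proof.
have [phi [phi_incr phi_mono]] := dickson_subseq f (leqnn n).
exists (phi 0%N), (phi 1%N); split; first exact: phi_incr.
by apply/mnm_lepP => i; apply: phi_mono.
Qed.

Section Descent.
Variables (n : nat) (le : rel 'X_{1..n}).
Hypothesis le_order : term_order le.

Lemma termo_no_descending_chain (x : nat -> 'X_{1..n}) :
  ~ (forall k, ltT le (x k.+1) (x k)).
Proof.
move=> desc; have [i [j [ij /(termo_tdvd le_order) le_ij]]] := dickson x.
have lt_ji : ltT le (x j) (x i).
  apply: (homo_ltn (r := fun a b => ltT le b a)) ij => // b a c /= ab bc.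
  exact (ltT_trans le_order bc ab).
by rewrite (ltT_leF le_order lt_ji) in le_ij.
Qed.

Lemma termo_no_infinite_descent (T : Type) (mu : T -> 'X_{1..n}) (P : T -> Prop) :
  (forall x, P x -> exists2 y, P y & ltT le (mu y) (mu x)) -> forall x, ~ P x.
Proof.
move=> step x0 Px0.
have step_sig (x : {x | P x}) : exists y : {x | P x}, ltT le (mu (sval y)) (mu (sval x)).
  by case: x => x Px; have [y Py lt_yx] := step x Px; exists (exist _ y Py).
have [next next_lt] := choice _ step_sig.
apply: (termo_no_descending_chain (x := fun k => mu (sval (iter k next (exist _ x0 Px0))))).
by move=> k; rewrite iterS; apply: next_lt.
Qed.

End Descent.

Section PIntegral.
Variable p : nat.
Hypothesis p_prime : prime p.

Definition p_integral (x : rat) :=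
  exists a b : int, ~~ (p %| `|b|)%N /\ x = a%:~R / b%:~R.

Lemma ndvd_abszM (b1 b2 : int) :
  ~~ (p %| `|b1|)%N -> ~~ (p %| `|b2|)%N -> ~~ (p %| `|(b1 * b2)%R|)%N.
Proof. by move=> b1N b2N; rewrite abszM Euclid_dvdM // negb_or b1N b2N. Qed.

Lemma ndvd_intr_neq0 (b : int) : ~~ (p %| `|b|)%N -> b%:~R != 0 :> rat.
Proof. by apply: contra; rewrite intr_eq0 => /eqP->; rewrite dvdn0. Qed.

Lemma p_integral_int (a : int) : p_integral a%:~R.
Proof.
exists a, 1; split; last by rewrite divr1.
by rewrite dvdn1; case: (p) p_prime => // -[].
Qed.

Lemma p_integral0 : p_integral 0.
Proof. by have := p_integral_int 0; rewrite mulr0z. Qed.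

Lemma p_integralD x y : p_integral x -> p_integral y -> p_integral (x + y).
Proof.
move=> [a1 [b1 [b1N ->]]] [a2 [b2 [b2N ->]]].
exists (a1 * b2 + a2 * b1), (b1 * b2); split; first exact: ndvd_abszM.
have := ndvd_intr_neq0 b1N; have := ndvd_intr_neq0 b2N.
by rewrite !rmorphD !rmorphM /= => ? ?; field; apply/andP.
Qed.

Lemma p_integralM x y : p_integral x -> p_integral y -> p_integral (x * y).
Proof.
move=> [a1 [b1 [b1N ->]]] [a2 [b2 [b2N ->]]].
exists (a1 * a2), (b1 * b2); split; first exact: ndvd_abszM.
have := ndvd_intr_neq0 b1N; have := ndvd_intr_neq0 b2N.
by rewrite !rmorphM /= => ? ?; field; apply/andP.
Qed.

Lemma p_integralN x : p_integral x -> p_integral (- x).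
Proof. by move=> [a [b [bN ->]]]; exists (- a), b; rewrite rmorphN mulNr. Qed.

Lemma p_integral_divz x (c : int) :
  p_integral x -> ~~ (p %| `|c|)%N -> p_integral (x / c%:~R).
Proof.
move=> [a [b [bN ->]]] cN; exists a, (b * c); split; first exact: ndvd_abszM.
by rewrite rmorphM invfM mulrA.
Qed.

Lemma p_integralP x : p_integral x <-> ~~ (p %| `|denq x|)%N.
Proof.
split=> [[a [b [bN x_ab]]]|denN]; last by exists (numq x), (denq x); rewrite divq_num_den.
have num_den : numq x * b = a * denq x.
  apply: (@intr_inj rat); rewrite !rmorphM /= numqE x_ab.
  by have := ndvd_intr_neq0 bN => ?; field.
have : (`|denq x| %| `|b|)%N.
  have coprime_den_num : coprime `|denq x| `|numq x| by rewrite coprime_sym coprime_num_den.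
  by rewrite -(Gauss_dvdr _ coprime_den_num) -abszM num_den abszM dvdn_mull.
by move=> den_b; apply: contra bN => /dvdn_trans; apply.
Qed.

End PIntegral.

Lemma dvdn_biglcm_seq (T : eqType) (s : seq T) (F : T -> nat) x :
  x \in s -> (F x %| \big[lcmn/1%N]_(y <- s) F y)%N.
Proof. by move=> xs; rewrite (big_rem x) //= dvdn_lcml. Qed.

Lemma biggcdn_dvd_seq (T : eqType) (s : seq T) (F : T -> nat) x :
  x \in s -> (\big[gcdn/0%N]_(y <- s) F y %| F x)%N.
Proof. by move=> xs; rewrite (big_rem x) //= dvdn_gcdl. Qed.

Lemma prime_dvd_biglcm_seq (T : eqType) (s : seq T) (F : T -> nat) p :
  prime p -> (p %| \big[lcmn/1%N]_(y <- s) F y)%N -> exists2 x, x \in s & (p %| F x)%N.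
Proof.
move=> p_prime; elim: s => [|y s IH]; first by rewrite big_nil dvdn1 => /eqP p1; rewrite p1 in p_prime.
rewrite big_cons => p_lcm.
have : (p %| F y * \big[lcmn/1%N]_(z <- s) F z)%N.
  by apply: dvdn_trans p_lcm _; rewrite dvdn_lcm dvdn_mulr ?dvdn_mull.
rewrite Euclid_dvdM // => /orP[p_Fy|/IH[x xs p_Fx]]; first by exists y; rewrite ?mem_head.
by exists x; rewrite // in_cons xs orbT.
Qed.

Section Prim.
Variable n : nat.
Implicit Types g : {mpoly rat[n]}.

Lemma den_gt0 g : (0 < den g)%N.
Proof.
rewrite /den; elim: (msupp g) => [|y s IH]; first by rewrite big_nil.
by rewrite big_cons lcmn_gt0 IH andbT absz_gt0 denq_neq0.
Qed.

Lemma denq_dvd_den g m : (`|denq g@_m| %| den g)%N.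
Proof.
have [mg|/memN_msupp_eq0->] := boolP (m \in msupp g); first exact: dvdn_biglcm_seq.
by rewrite -(rmorph0 (intr : int -> rat)) denq_int.
Qed.

Lemma icoefE g m : (icoef g m)%:~R = g@_m * (den g)%:R.
Proof.
have /dvdnP[k den_gk] := denq_dvd_den g m.
suff gm_den : g@_m * (den g)%:R = (numq g@_m * k)%:~R.
  by rewrite /icoef gm_den numq_int.
by rewrite den_gk natrM natr_absz gtr0_norm ?denq_gt0 // mulrA mulrAC -numqE rmorphM.
Qed.

Lemma content_neq0 g : g != 0 -> content g != 0%N.
Proof.
rewrite -msupp_eq0; case msupp_g: (msupp g) => [//|m s] _.
have mg : m \in msupp g by rewrite msupp_g mem_head.
apply: contraTneq (biggcdn_dvd_seq (fun m => `|icoef g m|%N) mg) => c0.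
rewrite -/(content g) c0 dvd0n absz_eq0 -(intr_eq0 rat) icoefE mulf_eq0.
by rewrite pnatr_eq0 negb_or -mcoeff_msupp mg -lt0n den_gt0.
Qed.

Lemma toQ_prim g : g != 0 -> toQ (prim g) = ((den g)%:R / (content g)%:R) *: g.
Proof.
move=> g_nz; rewrite /toQ /prim raddf_sum [X in _ *: X]mpolyE scaler_sumr.
apply: eq_big_seq => m mg /=; rewrite map_mpolyZ map_mpolyX scalerA; congr (_ *: _).
have c_nz : (content g)%:R != 0 :> rat by rewrite pnatr_eq0 content_neq0.
have c_dvd : ((content g)%:Z %| icoef g m)%Z by rewrite dvdzE; apply: biggcdn_dvd_seq.
apply: (mulIf c_nz); rewrite pmulrn -rmorphM /= divzK // icoefE.
by field.
Qed.

Lemma mcoeff_toQ (f : {mpoly int[n]}) m : (toQ f)@_m = (f@_m)%:~R.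
Proof. exact: mcoeff_map_mpoly. Qed.

Lemma msupp_toQ (f : {mpoly int[n]}) : msupp (toQ f) =i msupp f.
Proof. exact/perm_mem/msupp_map_mpoly/intr_inj. Qed.

Lemma toQ_eq0 (f : {mpoly int[n]}) : (toQ f == 0) = (f == 0).
Proof.
by rewrite -!msupp_eq0 -!size_eq0 (perm_size (msupp_map_mpoly _ intr_inj)).
Qed.

Lemma p_integral_coefs p g :
  prime p -> (forall m, p_integral p g@_m) <-> ~~ (p %| den g)%N.
Proof.
move=> p_prime; split=> [g_int|den_N m]; last first.
  apply/p_integralP; apply: contra den_N => /dvdn_trans; apply.
  exact: denq_dvd_den.
apply/negP=> /(prime_dvd_biglcm_seq p_prime)[m _].
by apply/negP/p_integralP.
Qed.

End Prim.

Lemma LT_toQ n le (le_order : term_order le) (f : {mpoly int[n]}) :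
  LT le (toQ f) = LT le f.
Proof. exact/(LT_eq_msupp le_order)/msupp_toQ. Qed.

Lemma mcoeffMX_if n (R : nzRingType) (q : {mpoly R[n]}) u v :
  (q * 'X_[u])@_v = if (u <= v)%MM then q@_(v - u) else 0.
Proof.
case: ifP => [uv|uNv]; first by rewrite -{1}(submK uv) addmC mcoeffMX.
apply: memN_msupp_eq0; rewrite (perm_mem (msuppMX q u)).
by apply/mapP => -[m' _ v_um']; rewrite v_um' lem_addr in uNv.
Qed.

Lemma msuppMX_mem n (R : nzRingType) (q : {mpoly R[n]}) u v :
  v \in msupp (q * 'X_[u]) -> exists2 m, m \in msupp q & v = (u + m)%MM.
Proof. by rewrite (perm_mem (msuppMX q u)) => /mapP[m]; exists m. Qed.

Section Ideals.
Variables (n : nat) (R : comNzRingType) (I : {mpoly R[n]} -> Prop).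
Hypothesis I_ideal : is_ideal I.

Lemma idealD f g : I f -> I g -> I (f + g).
Proof. by case: I_ideal => _ + _; apply. Qed.

Lemma idealMl h f : I f -> I (h * f).
Proof. by case: I_ideal => _ _; apply. Qed.

Lemma idealZ c f : I f -> I (c *: f).
Proof. by rewrite -mul_mpolyC; apply: idealMl. Qed.

Lemma idealB f g : I f -> I g -> I (f - g).
Proof. by move=> If Ig; rewrite -scaleN1r in Ig *; apply/idealD/idealZ. Qed.

Lemma ideal_sum k (F : 'I_k -> {mpoly R[n]}) : (forall i, I (F i)) -> I (\sum_(i < k) F i).
Proof. by case: I_ideal => I0 _ _ FI; apply: (big_ind I) => //; apply: idealD. Qed.

End Ideals.

Lemma in_ideal_gen_is_ideal n (R : comNzRingType) (F : seq {mpoly R[n]}) :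
  is_ideal (in_ideal_gen F).
Proof.
split.
- by exists (fun _ => 0); rewrite big1 // => i _; rewrite mul0r.
- move=> f g [c ->] [d ->]; exists (fun i => c i + d i).
  by rewrite -big_split; apply: eq_bigr => i _; rewrite mulrDl.
- move=> h f [c ->]; exists (fun i => h * c i).
  by rewrite mulr_sumr; apply: eq_bigr => i _; rewrite mulrA.
Qed.

Lemma in_ideal_gen_mem n (R : comNzRingType) (F : seq {mpoly R[n]}) x :
  x \in F -> in_ideal_gen F x.
Proof.
move=> xF; have xi : (index x F < size F)%N by rewrite index_mem.
exists (fun j => ((j : nat) == index x F)%:R).
rewrite (bigD1 (Ordinal xi)) //= eqxx mul1r nth_index // big1 ?addr0 // => j ne_jx.
by rewrite -val_eqE /= in ne_jx; rewrite (negbTE ne_jx) mul0r.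
Qed.

Lemma toQ_in_ideal_gen n (I : {mpoly rat[n]} -> Prop) (F : seq {mpoly int[n]}) f :
  is_ideal I -> (forall x, x \in F -> I (toQ x)) -> in_ideal_gen F f -> I (toQ f).
Proof.
move=> I_ideal F_I [c ->]; rewrite /toQ rmorph_sum /=; apply: ideal_sum => // i.
by rewrite rmorphM /=; apply/(idealMl I_ideal)/F_I/mem_nth.
Qed.

Section Theorem3p7.
Variables (n : nat) (le : rel 'X_{1..n}).
Hypothesis le_order : term_order le.
Variable I : {mpoly rat[n]} -> Prop.
Hypothesis I_ideal : is_ideal I.
Variable G : seq {mpoly rat[n]}.
Hypothesis G_reducedGB : is_reduced_GB le I G.
Hypothesis G_sorted : forall i, (i.+1 < size G)%N -> ltT le (LT le G`_i) (LT le G`_i.+1).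
Variable Gt : seq {mpoly int[n]}.
Hypothesis Gt_minimal : is_minimal_strong_GB le (map (@prim n) G) Gt.

Local Notation t i := (LT le G`_i).
Local Notation r := (size G).
Local Notation s := (size Gt).

Lemma G_neq0 g : g \in G -> g != 0.
Proof. by case: G_reducedGB => [[+ _ _] _ _ _]; apply. Qed.

Lemma G_in_ideal g : g \in G -> I g.
Proof. by case: G_reducedGB => [[_ + _] _ _ _]; apply. Qed.

Lemma G_nth_neq0 i : (i < r)%N -> G`_i != 0.
Proof. by move/(mem_nth 0)/G_neq0. Qed.

Lemma G_nth_in_ideal i : (i < r)%N -> I G`_i.
Proof. by move/(mem_nth 0)/G_in_ideal. Qed.

Lemma G_monic i : (i < r)%N -> G`_i@_(t i) = 1.
Proof. by case: G_reducedGB => [_ _ + _] /(mem_nth 0); apply. Qed.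

Lemma G_reduced i k m :
  (i < r)%N -> (k < r)%N -> k != i -> m \in msupp G`_i -> ~~ tdvd (t k) m.
Proof.
case: G_reducedGB => [_ G_uniq _ red] ir kr ki.
by apply: red; rewrite ?mem_nth // nth_uniq // eq_sym.
Qed.

Lemma G_GB f : I f -> f != 0 -> exists2 k, (k < r)%N & tdvd (t k) (LT le f).
Proof.
case: G_reducedGB => [[_ _ GB] _ _ _] If f_nz; have [g gG dvd_g] := GB f If f_nz.
by exists (index g G); rewrite ?index_mem ?nth_index.
Qed.

Lemma t_dvd_eq i k : (i < r)%N -> (k < r)%N -> tdvd (t k) (t i) -> k = i.
Proof.
move=> ir kr dvd_ki; apply/eqP; apply: contraTT dvd_ki => ki.
exact/(G_reduced ir kr ki)/(LT_msupp le_order)/G_nth_neq0.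
Qed.

Lemma Gt_neq0 g : g \in Gt -> g != 0.
Proof. by case: Gt_minimal => [[+ _ _] _]; apply. Qed.

Lemma Gt_generators f : in_ideal_gen Gt f <-> in_ideal_gen (map (@prim n) G) f.
Proof. by case: Gt_minimal => [[_ + _] _]. Qed.

Lemma Gt_strong f : in_ideal_gen Gt f -> f != 0 -> exists2 g, g \in Gt & LM_dvd le g f.
Proof. by case: Gt_minimal => [[_ _ +] _]; apply. Qed.

Lemma Gt_LM_dvd_eq g h : g \in Gt -> h \in Gt -> LM_dvd le g h -> g = h.
Proof.
case: Gt_minimal => [_ min] gGt hGt; apply: contraTeq => ne_gh.
rewrite -(nth_index 0 gGt) -(nth_index 0 hGt) min ?index_mem //.
by apply: contra ne_gh => /eqP/(congr1 (nth 0 Gt)); rewrite !nth_index // => ->.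
Qed.

Lemma Gt_uniq : uniq Gt.
Proof.
case: Gt_minimal => [_ min]; apply/(uniqP 0) => a b aGt bGt Gt_ab.
apply/eqP; apply: contraTT isT => /(min a b aGt bGt).
by rewrite Gt_ab /LM_dvd tdvd_refl dvdzz.
Qed.

Lemma prim_G g : g \in G -> toQ (prim g) = ((den g)%:R / (content g)%:R) *: g.
Proof. by move/G_neq0/toQ_prim. Qed.

Lemma prim_G_scale_neq0 g : g \in G -> ((den g)%:R / (content g)%:R : rat) != 0.
Proof.
move=> gG; rewrite mulf_neq0 ?invr_eq0 ?pnatr_eq0 ?content_neq0 ?G_neq0 //.
by rewrite -lt0n den_gt0.
Qed.

Lemma Gt_ideal_toQ f : in_ideal_gen Gt f -> I (toQ f).
Proof.
move/Gt_generators; apply: toQ_in_ideal_gen => // _ /mapP[g gG ->].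
by rewrite prim_G //; apply/(idealZ I_ideal)/G_in_ideal.
Qed.

Lemma Gt_in_ideal g : g \in Gt -> I (toQ g).
Proof. by move/in_ideal_gen_mem/Gt_ideal_toQ. Qed.

Lemma Gt_ideal_LT f : in_ideal_gen Gt f -> f != 0 ->
  exists2 k, (k < r)%N & tdvd (t k) (LT le f).
Proof.
move=> f_J f_nz; rewrite -(LT_toQ le_order).
by apply: G_GB; [apply: Gt_ideal_toQ | rewrite toQ_eq0].
Qed.

Lemma prim_G_nth i : (i < r)%N ->
  [/\ in_ideal_gen Gt (prim G`_i), prim G`_i != 0 & LT le (prim G`_i) = t i].
Proof.
move=> /(mem_nth 0) gG; split.
- by apply/Gt_generators/in_ideal_gen_mem/map_f.
- by rewrite -toQ_eq0 prim_G // scaler_eq0 negb_or prim_G_scale_neq0 ?G_neq0.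
- by rewrite -(LT_toQ le_order) prim_G // (LT_scale le_order) ?prim_G_scale_neq0.
Qed.

(* [u g + v h] with [u LC(g) + v LC(h) = gcd] has leading monomial
   [gcd * LT(g)]; the element of [Gt] dividing it divides both [LM(g)] and
   [LM(h)], so by minimality it equals both. *)
Lemma Gt_LT_inj g h : g \in Gt -> h \in Gt -> LT le g = LT le h -> g = h.
Proof.
move=> gGt hGt LT_gh.
have [u [v uv_gcd]] := Bezoutz (LC le g) (LC le h).
set d := gcdz _ _ in uv_gcd.
have d_nz : d != 0 by rewrite gcdz_eq0 negb_and !(LC_neq0 le_order) ?Gt_neq0.
set z := u *: g + v *: h.
have z_LT : z@_(LT le g) = d by rewrite mcoeffD !mcoeffZ -uv_gcd /LC LT_gh.
have LT_z : LT le z = LT le g.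
  apply: (LT_eq le_order) => [|m /msuppD_le]; first by rewrite mcoeff_msupp z_LT.
  by rewrite mem_cat => /orP[] /msuppZ_le; [|rewrite LT_gh]; apply: LT_max.
have z_nz : z != 0 by apply: contra_neq d_nz => z0; rewrite -z_LT z0 mcoeff0.
have z_J : in_ideal_gen Gt z.
  have J := in_ideal_gen_is_ideal Gt.
  by apply: (idealD J); apply: (idealZ J); apply: in_ideal_gen_mem.
have LC_z : LC le z = d by rewrite /LC LT_z z_LT.
have [k kGt] := Gt_strong z_J z_nz; rewrite /LM_dvd LT_z LC_z => /andP[t_k LC_k].
have <- : k = g by apply: Gt_LM_dvd_eq; rewrite // /LM_dvd t_k (dvdz_trans LC_k) ?dvdz_gcdl.
by apply: Gt_LM_dvd_eq; rewrite // /LM_dvd -LT_gh t_k (dvdz_trans LC_k) ?dvdz_gcdr.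
Qed.

Lemma Gt_with_LT i : (i < r)%N ->
  exists2 g, g \in Gt & LT le g = t i /\ (LC le g %| LC le (prim G`_i))%Z.
Proof.
move=> ir; have [prim_J prim_nz LT_prim] := prim_G_nth ir.
have [g gGt] := Gt_strong prim_J prim_nz; rewrite /LM_dvd LT_prim => /andP[g_t g_LC].
exists g => //; split => //.
have [k kr k_g] := Gt_ideal_LT (in_ideal_gen_mem gGt) (Gt_neq0 gGt).
have ki := t_dvd_eq ir kr (tdvd_trans k_g g_t).
by rewrite ki in k_g; apply: tdvd_anti.
Qed.

Definition cond_a (Gt' : seq {mpoly int[n]}) :=
  (r <= s)%N /\
  (forall i, (i < r)%N -> LT le Gt'`_i = LT le G`_i) /\
  (forall i, (r <= i < s)%N ->
     exists2 k, (k < r)%N &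
       tdvd (LT le G`_k) (LT le Gt'`_i) /\ LT le Gt'`_i != LT le G`_k).

Definition Gt_at i := nth 0 Gt (find (fun g => LT le g == t i) Gt).

Lemma Gt_at_spec i : (i < r)%N -> Gt_at i \in Gt /\ LT le (Gt_at i) = t i.
Proof.
move=> ir; have [g gGt [g_t _]] := Gt_with_LT ir.
have has_t : has (fun g => LT le g == t i) Gt by apply/hasP; exists g; rewrite ?g_t.
by split; [apply: mem_nth; rewrite -has_find | apply/eqP; exact: (nth_find 0 has_t)].
Qed.

Definition Gt_rest := [seq g <- Gt | LT le g \notin map (LT le) G].

Lemma Gt_rest_LT g : g \in Gt_rest ->
  exists2 k, (k < r)%N & tdvd (t k) (LT le g) /\ LT le g != t k.
Proof.
rewrite mem_filter => /andP[g_new gGt].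
have [k kr t_k] := Gt_ideal_LT (in_ideal_gen_mem gGt) (Gt_neq0 gGt).
by exists k => //; split => //; apply: contraNneq g_new => ->; apply/map_f/mem_nth.
Qed.

Lemma perm_Gt_at_rest : perm_eq (map Gt_at (iota 0 r) ++ Gt_rest) Gt.
Proof.
apply: uniq_perm Gt_uniq _ => [|g].
  rewrite cat_uniq filter_uniq ?Gt_uniq // andbT map_inj_in_uniq ?iota_uniq /=.
    apply/hasPn => g; rewrite mem_filter => /andP[g_new _].
    apply: contra g_new => /mapP[i]; rewrite mem_iota => ir ->.
    by rewrite (Gt_at_spec ir).2 map_f ?mem_nth.
  move=> i j; rewrite !mem_iota => ir jr Gt_ij.
  apply/(t_dvd_eq jr ir); rewrite -(Gt_at_spec ir).2 -(Gt_at_spec jr).2 Gt_ij.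
  exact: tdvd_refl.
rewrite mem_cat mem_filter; apply/idP/idP => [/orP[/mapP[i]|/andP[//]]|gGt].
  by rewrite mem_iota => ir ->; apply: (Gt_at_spec ir).1.
case: (boolP (LT le g \in map (LT le) G)) => [/mapP[h hG g_h]|]; last by rewrite gGt orbT.
have kr : (index h G < r)%N by rewrite index_mem.
apply/orP; left; apply/mapP; exists (index h G); first by rewrite mem_iota.
by apply: Gt_LT_inj gGt (Gt_at_spec kr).1 _; rewrite (Gt_at_spec kr).2 nth_index.
Qed.

Lemma part_a : exists2 Gt', perm_eq Gt' Gt & cond_a Gt'.
Proof.
set A := map Gt_at (iota 0 r).
have size_A : size A = r by rewrite size_map size_iota.
have size_Gt : (r + size Gt_rest)%N = s.
  by rewrite -(perm_size perm_Gt_at_rest) size_cat size_A.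
exists (A ++ Gt_rest); first exact: perm_Gt_at_rest.
split; first by rewrite -size_Gt leq_addr.
split=> [i ir|i /andP[ri i_s]]; rewrite nth_cat size_A.
  by rewrite ir (nth_map 0%N) ?size_iota // nth_iota // (Gt_at_spec ir).2.
rewrite ltnNge ri /=; apply/Gt_rest_LT/mem_nth.
by rewrite ltn_subLR // size_Gt.
Qed.

Lemma cond_a_mem Gt' i : perm_eq Gt' Gt -> cond_a Gt' -> (i < r)%N -> Gt'`_i \in Gt.
Proof.
move=> Gt'_Gt [rs _] ir; rewrite -(perm_mem Gt'_Gt) mem_nth //.
by rewrite (perm_size Gt'_Gt) (leq_trans ir rs).
Qed.

Lemma part_b Gt' : perm_eq Gt' Gt -> cond_a Gt' ->
  is_minimal_GB le I (map (@toQ n) (take r Gt')).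
Proof.
move=> Gt'_Gt a_Gt'; have [rs [LT_Gt' _]] := a_Gt'; set H := map _ _.
have size_H : size H = r by rewrite size_map size_takel // (perm_size Gt'_Gt).
have H_nth i : (i < r)%N -> H`_i = toQ Gt'`_i.
  by move=> ir; rewrite (nth_map 0) ?nth_take // size_takel // (perm_size Gt'_Gt).
have LT_H i : (i < r)%N -> LT le H`_i = t i.
  by move=> ir; rewrite H_nth // (LT_toQ le_order) LT_Gt'.
have mem_H g : g \in H -> exists2 i, (i < r)%N & g = H`_i.
  by case/(nthP 0) => i; rewrite size_H => ir <-; exists i.
split; last first.
  move=> i j; rewrite size_H => ir jr ne_ij; rewrite !LT_H //.
  by apply: contra ne_ij => /(t_dvd_eq jr ir) ->.
split.
- move=> _ /mem_H[i ir ->]; rewrite H_nth // toQ_eq0.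
  exact/Gt_neq0/(cond_a_mem Gt'_Gt a_Gt').
- move=> _ /mem_H[i ir ->]; rewrite H_nth //.
  exact/Gt_in_ideal/(cond_a_mem Gt'_Gt a_Gt').
- move=> f If f_nz; have [k kr t_k] := G_GB If f_nz.
  by exists H`_k; [rewrite mem_nth ?size_H | rewrite LT_H].
Qed.

Lemma part_c Gt' i : perm_eq Gt' Gt -> cond_a Gt' -> (i < r)%N ->
  (LC le Gt'`_i %| LC le (prim G`_i))%Z.
Proof.
move=> Gt'_Gt a_Gt' ir; have [g gGt [g_t g_LC]] := Gt_with_LT ir.
by rewrite -(Gt_LT_inj gGt (cond_a_mem Gt'_Gt a_Gt' ir)) // g_t a_Gt'.2.1.
Qed.

Lemma t_ltT i j : (i < j)%N -> (j < r)%N -> ltT le (t i) (t j).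
Proof.
move=> ij jr; have ir := ltn_trans ij jr.
apply: (@homo_ltn_in _ (gtn r) (fun i => t i) (ltT le)) ij => //.
- exact: ltT_trans le_order.
- by move=> a b _ br c /andP[_ /ltn_trans]; apply.
- by move=> a _; apply: G_sorted.
Qed.

Lemma t_ltT_index i k : (i < r)%N -> (k < r)%N -> ltT le (t k) (t i) -> (k < i)%N.
Proof.
move=> ir kr lt_ki; case: (ltngtP k i) => // [lt_ik|ki]; last by rewrite ki ltTxx in lt_ki.
by have := ltT_trans le_order (t_ltT lt_ik kr) lt_ki; rewrite ltTxx.
Qed.

Definition p_integral_monic_at p i f :=
  [/\ I f, f@_(t i) = 1, (forall m, m \in msupp f -> le m (t i))
    & forall m, p_integral p f@_m].

Lemma LT_sub_G p i f : (i < r)%N -> p_integral_monic_at p i f -> f != G`_i ->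
  [/\ ltT le (LT le (f - G`_i)) (t i), LT le (f - G`_i) \notin msupp G`_i
    & exists2 k, (k < i)%N & tdvd (t k) (LT le (f - G`_i))].
Proof.
move=> ir [If f_ti f_le _] f_ne; set d := f - G`_i.
have d_nz : d != 0 by rewrite subr_eq0.
have [k kr t_k] := G_GB (idealB I_ideal If (G_nth_in_ideal ir)) d_nz.
have d_lt : ltT le (LT le d) (t i).
  have d_LT := LT_msupp le_order d_nz; apply/andP; split.
    by move/msuppB_le: d_LT; rewrite mem_cat => /orP[/f_le|/(LT_max le_order)].
  by apply: contraTneq d_LT => ->; rewrite mcoeff_msupp mcoeffB f_ti G_monic // subrr eqxx.
have ki := t_ltT_index ir kr (le_ltT_trans le_order (termo_tdvd le_order t_k) d_lt).
split=> //; last by exists k.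
by apply: contraTN t_k => /(G_reduced ir kr); apply; rewrite neq_ltn ki.
Qed.

Lemma G_shift k m : (k < r)%N -> tdvd (t k) m ->
  [/\ I (G`_k * 'X_[m - t k]), (G`_k * 'X_[m - t k])@_m = 1
    & forall v, v \in msupp (G`_k * 'X_[m - t k]) -> le v m].
Proof.
move=> kr t_k; have m_eq : (m - t k + t k)%MM = m := submK t_k.
split.
- by rewrite mulrC; apply/(idealMl I_ideal)/G_nth_in_ideal.
- by rewrite -[X in _@_X]m_eq mcoeffMX G_monic.
- move=> _ /msuppMX_mem[w /(LT_max le_order) w_le ->].
  by rewrite -[X in le _ X]m_eq; apply: termo_addl.
Qed.

(* Cancel the monomial [m = LT(f - g_i)] of [f] by a shift of [g_k]: since [G]
   is reduced, [m] is not in the support of [g_i], so the coefficient of [m] in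
   [f - g_i] is the p-integral coefficient of [m] in [f]. *)
Lemma p_integral_monic_at_step p i f : prime p -> (i < r)%N ->
  (forall j, (j < i)%N -> forall m, p_integral p G`_j@_m) ->
  ~ (forall m, p_integral p G`_i@_m) -> p_integral_monic_at p i f ->
  exists2 f', p_integral_monic_at p i f' & ltT le (LT le (f' - G`_i)) (LT le (f - G`_i)).
Proof.
move=> p_prime ir G_int Gi_nint f_at.
have not_Gi g : p_integral_monic_at p i g -> g != G`_i.
  by case=> _ _ _ g_int; apply/eqP => g_Gi; apply: Gi_nint; rewrite -g_Gi.
have [d_lt d_notin [k ki t_k]] := LT_sub_G ir f_at (not_Gi f f_at).
set m := LT le (f - G`_i) in d_lt d_notin t_k *.
have [Iq q_m q_le] := G_shift (ltn_trans ki ir) t_k.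
set q := G`_k * _ in Iq q_m q_le.
have q_ti : q@_(t i) = 0.
  by apply/memN_msupp_eq0/negP => /q_le; rewrite (ltT_leF le_order d_lt).
case: (f_at) => If f_ti f_le f_int.
have f'_at : p_integral_monic_at p i (f - f@_m *: q).
  split.
  - exact/(idealB I_ideal)/(idealZ I_ideal).
  - by rewrite mcoeffB mcoeffZ q_ti mulr0 subr0.
  - move=> v /msuppB_le; rewrite mem_cat => /orP[/f_le //|/msuppZ_le/q_le v_m].
    by apply: termo_trans v_m _; case/andP: d_lt.
  - move=> v; rewrite mcoeffB mcoeffZ mcoeffMX_if.
    apply/p_integralD/p_integralN/p_integralM => //.
    by case: ifP => _; [apply: G_int | apply: p_integral0].
exists (f - f@_m *: q) => //.
have d'_nz := not_Gi _ f'_at; rewrite -subr_eq0 addrAC in d'_nz.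
have d'_m : (f - G`_i - f@_m *: q)@_m = 0.
  by rewrite !mcoeffB mcoeffZ q_m mulr1 (memN_msupp_eq0 d_notin) subr0 subrr.
have d'_LT := LT_msupp le_order d'_nz; rewrite addrAC; apply/andP; split.
  move/msuppB_le: d'_LT; rewrite mem_cat.
  by case/orP=> [/(LT_max le_order)|/msuppZ_le/q_le].
by apply: contraTneq d'_LT => ->; rewrite mcoeff_msupp d'_m eqxx.
Qed.

Lemma G_p_integral_of_monic_at p i f : prime p -> (i < r)%N ->
  (forall j, (j < i)%N -> forall m, p_integral p G`_j@_m) ->
  p_integral_monic_at p i f -> forall m, p_integral p G`_i@_m.
Proof.
move=> p_prime ir G_int f_at; apply: NNPP => Gi_nint.
apply: (termo_no_infinite_descent le_order (mu := fun g => LT le (g - G`_i))) f_at.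
by move=> g; apply: p_integral_monic_at_step.
Qed.

Lemma part_d Gt' i p : perm_eq Gt' Gt -> cond_a Gt' -> (i < r)%N -> prime p ->
  (p %| den G`_i)%N -> (forall j, (j < i)%N -> ~~ (p %| den G`_j)%N) ->
  (p%:Z %| LC le Gt'`_i)%Z.
Proof.
move=> Gt'_Gt a_Gt' ir p_prime p_den p_Nden; apply: contraT => p_NLC.
have hGt := cond_a_mem Gt'_Gt a_Gt' ir; have h_t := a_Gt'.2.1 i ir.
set h := Gt'`_i in hGt h_t p_NLC *.
have LC_N : ~~ (p %| `|LC le h|)%N by rewrite dvdzE absz_nat in p_NLC.
have LC_nz : (LC le h)%:~R != 0 :> rat by rewrite intr_eq0 (LC_neq0 le_order) ?Gt_neq0.
suff: forall m, p_integral p G`_i@_m by move/(p_integral_coefs _ p_prime); rewrite p_den.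
apply: (G_p_integral_of_monic_at (f := (LC le h)%:~R^-1 *: toQ h)) => //.
  by move=> j ji; apply/(p_integral_coefs _ p_prime)/p_Nden.
split.
- exact/(idealZ I_ideal)/Gt_in_ideal.
- by rewrite mcoeffZ mcoeff_toQ -h_t mulVf.
- by move=> m /msuppZ_le; rewrite msupp_toQ -h_t; apply: LT_max.
- move=> m; rewrite mcoeffZ mcoeff_toQ mulrC.
  exact/(p_integral_divz p_prime)/LC_N/p_integral_int.
Qed.

End Theorem3p7.

Theorem theorem3p7
  (n : nat) (le : rel 'X_{1..n}) (Hle : term_order le)
  (I : {mpoly rat[n]} -> Prop) (HI : is_ideal I)
  (HI0 : exists f, I f /\ f != 0)
  (G : seq {mpoly rat[n]}) (HG : is_reduced_GB le I G)
  (Hsort : forall i, (i.+1 < size G)%N -> ltT le (LT le G`_i) (LT le G`_i.+1))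
  (Gt : seq {mpoly int[n]}) (HGt : is_minimal_strong_GB le (map (@prim n) G) Gt) :
  let r := size G in
  let s := size Gt in
  let cond_a := fun Gt' : seq {mpoly int[n]} =>
    (r <= s)%N /\
    (forall i, (i < r)%N -> LT le Gt'`_i = LT le G`_i) /\
    (forall i, (r <= i < s)%N ->
       exists2 k, (k < r)%N &
         tdvd (LT le G`_k) (LT le Gt'`_i) /\ LT le Gt'`_i != LT le G`_k) in
  (* (a) *)
  (exists2 Gt', perm_eq Gt' Gt & cond_a Gt') /\
  (forall Gt', perm_eq Gt' Gt -> cond_a Gt' ->
     (* (b) *)
     is_minimal_GB le I (map (@toQ n) (take r Gt')) /\
     (* (c) *)
     (forall i, (i < r)%N -> (LC le Gt'`_i %| LC le (prim G`_i))%Z) /\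
     (* (d) *)
     (forall i p, (i < r)%N -> prime p -> (p %| den G`_i)%N ->
        (forall j, (j < i)%N -> ~~ (p %| den G`_j)%N) ->
        (p%:Z %| LC le Gt'`_i)%Z)).
Proof.
move=> r s cond_a'; split; first exact (part_a Hle HI HG HGt).
move=> Gt' Gt'_Gt a_Gt'; split; first exact (part_b Hle HI HG HGt Gt'_Gt a_Gt').
split=> [i ir|i p ir p_prime p_den p_Nden].
  exact (part_c Hle HI HG HGt Gt'_Gt a_Gt' ir).
exact (part_d Hle HI HG Hsort HGt Gt'_Gt a_Gt' ir p_prime p_den p_Nden).
Qed.
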